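(* Let $T$ be a finite tree rooted at a fixed non-leaf vertex $r$ and let $k\geq 1$. For each $0\leq i\leq k-1$, let $I_i$ be the graph on $V(T)$ in which distinct $u,v$ are adjacent iff $f_i(u)\cap f_i(v)\neq\emptyset$, where $f_i(u)=[s(p^i(u)),\,t(p^{k-1-i}(u))]$. Then for every $0\leq i\leq k-1$, $I_i$ is a supergraph of $T^k$, i.e. $E(T^k)\subseteq E(I_i)$.
   Context: $T^k$ is the graph on $V(T)$ in which distinct $u,v$ are adjacent iff $d_T(u,v)\leq k$, where $d_T$ is the distance in $T$. For vertices $u,v$, $u\preceq v$ ($u$ is an ancestor of $v$) means that $u$ lies on the unique path in $T$ from $r$ to $v$. For $u\neq r$, $p(u)$ is the neighbour of $u$ on the path from $u$ to $r$, and $p(r)=r$; $p^0(u)=u$ and $p^i(u)=p(p^{i-1}(u))$ for $i\geq 1$. Let $l_1,\ldots,l_m$ be the leaves (degree-1 vertices) of $T$ in the order in which they appear in some depth-first traversal of $T$ starting from $r$; for a vertex $u$, $L(u)=\{i: u\preceq l_i\}$, $s(u)=\min L(u)$, $t(u)=\max L(u)$. (Each $f_i(u)$ is a closed interval with $s(p^i(u))\leq t(p^{k-1-i}(u))$.) *)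

From mathcomp Require Import all_boot.
From mathcomp Require Import boolp.
Set Implicit Arguments. Unset Strict Implicit. Unset Printing Implicit Defensive.

Section TreeDefs.
Variables (V : finType) (e : rel V).

Definition simple_graph : Prop := irreflexive e /\ symmetric e.

Definition acyclic : Prop :=
  forall c : seq V, uniq c -> 2 < size c -> ~~ cycle e c.

Definition is_tree : Prop :=
  simple_graph /\ (forall u v, connect e u v) /\ acyclic.

Definition deg (v : V) : nat := #|[set w | e v w]|.
Definition is_leaf (v : V) : bool := deg v == 1.

Definition dist_le (u v : V) (n : nat) : Prop :=
  exists s : seq V, [/\ path e u s, last u s = v & size s <= n].

Definition power_adj (n : nat) (u v : V) : Prop := u != v /\ dist_le u v n.

Variable r : V.

Definition anc (u v : V) : Prop :=
  exists s : seq V, [/\ path e r s, last r s = v, uniq (r :: s) & u \in r :: s].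

Definition par (u : V) : V :=
  if u == r then r else odflt u [pick w | e u w && `[< anc w u >] ].

(* ord is a depth-first traversal of T from r: every vertex listed once,
   starting at r, and each new vertex is a child of a vertex on the current
   stack, i.e. of an ancestor of the previously visited vertex *)
Definition dfs_order (ord : seq V) : Prop :=
  [/\ uniq ord, (forall v, v \in ord), nth r ord 0 = r &
      forall j, 0 < j < size ord -> anc (par (nth r ord j)) (nth r ord j.-1)].

Variable ord : seq V.

(* l_0, l_1, ... : leaves in order of appearance (0-based indices) *)
Definition leaves_seq : seq V := [seq v <- ord | is_leaf v].

Definition Lset (u : V) : seq nat :=
  [seq i <- iota 0 (size leaves_seq) | `[< anc u (nth r leaves_seq i) >] ].

Definition s_ (u : V) : nat := \big[minn/size leaves_seq]_(i <- Lset u) i.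
Definition t_ (u : V) : nat := \max_(i <- Lset u) i.

Definition f_lo (k i : nat) (u : V) : nat := s_ (iter i par u).
Definition f_hi (k i : nat) (u : V) : nat := t_ (iter (k.-1 - i) par u).

Definition I_adj (k i : nat) (u v : V) : Prop :=
  u != v /\ exists x : nat,
    (f_lo k i u <= x <= f_hi k i u) /\ (f_lo k i v <= x <= f_hi k i v).

End TreeDefs.

From mathcomp Require Import all_boot.
From mathcomp Require Import boolp.
From mathcomp Require Import zify.

Set Implicit Arguments.
Unset Strict Implicit.
Unset Printing Implicit Defensive.

(* Let w be the lowest common ancestor of u and v, at distances a and b from
   them, so a + b <= k. Put j = k-1-i. If a <= i then p^i(u) is an ancestor of
   w, hence of v; otherwise b <= k - a <= j and p^j(v) is an ancestor of u. In
   both cases p^i(u) and p^j(v) have a common descendant, hence a common leaf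
   descendant l_m, and then s(p^i(u)) <= m <= t(p^j(v)). The same holds for
   every choice of the two endpoints among u and v, so each lower end of
   f_i(u), f_i(v) is below each upper end and the two intervals meet. *)

Lemma geq_bigmin_seq (s : seq nat) d j : j \in s -> \big[minn/d]_(i <- s) i <= j.
Proof.
elim: s => // a s IH; rewrite in_cons big_cons => /orP [/eqP -> | js].
  exact: geq_minl.
exact: leq_trans (geq_minr _ _) (IH js).
Qed.

Lemma intervals_meet a b c d :
  a <= b -> a <= d -> c <= b -> c <= d -> exists x, a <= x <= b /\ c <= x <= d.
Proof.
by move=> ab ad cb cd; exists (maxn a c); rewrite !geq_max leq_maxl leq_maxr ab cb ad cd.
Qed.

Section AcyclicPaths.
Variables (V : finType) (e : rel V).
Hypotheses (esym : symmetric e) (eacy : acyclic e).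

(* Otherwise the two paths would close up into a cycle. *)
Lemma acyclic_paths_meet x s1 s2 :
  path e x s1 -> path e x s2 -> uniq (x :: s1) -> uniq (x :: s2) ->
  last x s1 = last x s2 -> s1 != s2 ->
  has (fun z => (z \in s2) && (z != last x s1)) s1.
Proof.
move=> p1 p2 /= /andP [xs1 u1] /andP [xs2 u2] hl neq.
apply/negPn/negP => /hasPn hn.
have lastin s : s != [::] -> last x s \in s by case: s => // a s _ /=; exact: mem_last.
case/lastP: s2 neq p2 xs2 u2 hl hn => [|s2' y] neq p2 xs2 u2 hl hn.
  by move: (lastin s1 neq); rewrite hl /= => H; rewrite H in xs1.
rewrite last_rcons in hl.
have ne1 : s1 != [::].
  by apply/eqP => s10; subst s1; move: xs2; rewrite -hl /= mem_rcons mem_head.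
move: u2; rewrite rcons_uniq => /andP [ys2' u2'].
move: xs2; rewrite mem_rcons in_cons negb_or => /andP [_ xs2'].
apply: (negP (@eacy (x :: s1 ++ rev s2') _ _)).
- rewrite /= mem_cat mem_rev negb_or xs1 xs2' /= cat_uniq u1 rev_uniq u2' andbT /=.
  apply/hasPn => z; rewrite mem_rev => zs2'; apply/negP => zs1.
  have := hn z zs1; rewrite hl mem_rcons in_cons zs2' orbT /=.
  by apply/negP/negPn; apply/eqP => zy; rewrite -zy zs2' in ys2'.
- rewrite /= size_cat size_rev.
  case: s2' {hn p2 u2' ys2' xs2'} neq => [|a s2'] neq /=; last first.
    by clear neq; case: s1 ne1 {xs1 u1 p1 hl} => //= b s1 _; lia.
  case: s1 ne1 neq p1 xs1 u1 hl => // b [|c s1] //= _ neq _ _ _ hl.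
  by rewrite hl eqxx in neq.
- rewrite /= rcons_cat cat_path p1 /= hl -rev_cons.
  have := rev_path e x (rcons s2' y); rewrite last_rcons belast_rcons => ->.
  by rewrite (@eq_path _ _ e) // => a b; rewrite esym.
Qed.

Lemma acyclic_path_unique x s1 s2 :
  path e x s1 -> path e x s2 -> uniq (x :: s1) -> uniq (x :: s2) ->
  last x s1 = last x s2 -> s1 = s2.
Proof.
move: {2}(size s1 + size s2) (leqnn (size s1 + size s2)) => n.
elim: n x s1 s2 => [|n IH] x s1 s2 Hn p1 p2 u1 u2 hl.
  by case: s1 s2 Hn {p1 p2 u1 u2 hl} => [|??] [|??].
case: (eqVneq s1 s2) => // neq.
case/hasP: (acyclic_paths_meet p1 p2 u1 u2 hl neq) => z zs1 /andP [zs2 zy].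
case/splitPr: zs1 p1 u1 hl Hn zy => s1a s1b p1 u1 hl Hn zy.
case/splitPr: zs2 p2 u2 hl Hn => s2a s2b p2 u2 hl Hn.
rewrite !last_cat /= in hl zy; rewrite !size_cat /= in Hn.
rewrite !cat_path /= in p1 p2.
case/and3P: p1 => p1a e1 p1b; case/and3P: p2 => p2a e2 p2b.
have hb1 : 0 < size s1b by case: (s1b) zy => //=; rewrite eqxx.
have [sz_b sz_a] : size s1b + size s2b <= n /\ (size s1a).+1 + (size s2a).+1 <= n.
  by move: Hn hb1; clear; move: (size s1a) (size s1b) (size s2a) (size s2b); lia.
have uniq_split s t : uniq (x :: s ++ z :: t) -> uniq (x :: rcons s z) && uniq (z :: t).
  move=> u; apply/andP; split.
  - by move: u; rewrite -cat_cons -cat_rcons cat_uniq => /and3P [].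
  - by move: u; rewrite -cat_cons cat_uniq => /and3P [].
case/andP: (uniq_split _ _ u1) => u1a u1b; case/andP: (uniq_split _ _ u2) => u2a u2b.
have -> : s1b = s2b by apply: (IH z).
have hs : rcons s1a z = rcons s2a z.
  by apply: (IH x); rewrite ?rcons_path ?p1a ?p2a ?e1 ?e2 ?last_rcons ?size_rcons.
by rewrite (rcons_injl z hs).
Qed.

End AcyclicPaths.

Section RootedTree.
Variables (V : finType) (e : rel V) (r : V).
Hypotheses (eirr : irreflexive e) (esym : symmetric e) (eacy : acyclic e).
Hypothesis econn : forall u v, connect e u v.

Lemma exists_root_path x : exists s, [&& path e r s, last r s == x & uniq (r :: s)].
Proof.
case/connectP: (econn r x) => p pp ->.
case: (shortenP pp) => p' pp' up' _.
by exists p'; rewrite pp' eqxx up'.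
Qed.

Definition root_path x := xchoose (exists_root_path x).

Lemma root_pathP x :
  [/\ path e r (root_path x), last r (root_path x) = x & uniq (r :: root_path x)].
Proof. by case/and3P: (xchooseP (exists_root_path x)) => a /eqP b c. Qed.

Lemma root_pathE s x :
  path e r s -> last r s = x -> uniq (r :: s) -> root_path x = s.
Proof.
move=> ps ls us; have [px lx ux] := root_pathP x.
by apply: (acyclic_path_unique esym eacy px ps ux us); rewrite lx ls.
Qed.

Lemma root_path_inj : injective root_path.
Proof.
move=> a b h; have [_ la _] := root_pathP a; have [_ lb _] := root_pathP b.
by rewrite -la -lb h.
Qed.

Lemma root_path_root : root_path r = [::].
Proof. exact: root_pathE. Qed.

Definition ancestor a b := a \in r :: root_path b.

Definition depth x := size (root_path x).

Lemma ancE u v : anc e r u v <-> ancestor u v.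
Proof.
split; first by case=> s [ps ls us us']; rewrite /ancestor (root_pathE ps ls us).
by move=> h; have [px lx ux] := root_pathP v; exists (root_path v).
Qed.

Lemma ancestor_refl u : ancestor u u.
Proof. by have [_ lu _] := root_pathP u; rewrite /ancestor -{1}lu mem_last. Qed.

Lemma ancestor_root u : ancestor u r -> u = r.
Proof. by rewrite /ancestor root_path_root mem_seq1 => /eqP. Qed.

Lemma root_path_prefix u v :
  ancestor u v -> exists t, root_path v = root_path u ++ t.
Proof.
rewrite /ancestor in_cons => /orP[/eqP -> | uin].
  by exists (root_path v); rewrite root_path_root.
have [pv lv uv] := root_pathP v.
case/splitPr: uin pv lv uv => s1 s2 pv lv uv.
exists s2; suff -> : root_path u = rcons s1 u by rewrite cat_rcons.
apply: root_pathE.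
- by move: pv; rewrite cat_path rcons_path /= => /and3P[-> ->].
- by rewrite last_rcons.
- have : uniq ((r :: rcons s1 u) ++ s2) by rewrite /= -cats1 -catA.
  by rewrite cat_uniq => /and3P[].
Qed.

Lemma ancestor_trans b a c : ancestor a b -> ancestor b c -> ancestor a c.
Proof.
move=> hab /root_path_prefix [t]; rewrite /ancestor => ->.
by rewrite -cat_cons mem_cat; apply/orP; left.
Qed.

Lemma ancestor_depth u v : ancestor u v -> depth u <= depth v.
Proof.
by case/root_path_prefix => t; rewrite /depth => ->; rewrite size_cat leq_addr.
Qed.

Lemma ancestor_depth_lt u v : ancestor u v -> u != v -> depth u < depth v.
Proof.
case/root_path_prefix => -[|a t]; rewrite /depth => h uv.
  by rewrite cats0 in h; rewrite (root_path_inj h) eqxx in uv.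
by rewrite h size_cat /= addnS ltnS leq_addr.
Qed.

Lemma root_path_rcons x w :
  e x w -> ancestor w x -> root_path x = rcons (root_path w) x.
Proof.
move=> exw /[dup] awx /root_path_prefix [t ht].
have wx : w != x by apply: contraTneq exw => ->; rewrite eirr.
have [px lx ux] := root_pathP x; have [pw lw uw] := root_pathP w.
have xt : x \in t.
  case: t ht => [|a t] ht.
    by rewrite cats0 in ht; rewrite (root_path_inj ht) eqxx in wx.
  by move: lx; rewrite ht last_cat lw /= => <-; exact: mem_last.
have xnw : x \notin r :: root_path w.
  by move: ux; rewrite ht -cat_cons cat_uniq => /and3P [_ /hasPn H _]; exact: H.
apply: root_pathE.
- by rewrite rcons_path pw lw esym.
- by rewrite last_rcons.
- by rewrite -rcons_cons rcons_uniq xnw uw.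
Qed.

Lemma par_spec x : x != r -> e x (par e r x) /\ ancestor (par e r x) x.
Proof.
move=> xr; have [px lx ux] := root_pathP x.
have [q hq] : exists q, root_path x = rcons q x.
  move: lx; case/lastP: (root_path x) => [/= lx|q y]; first by rewrite lx eqxx in xr.
  by rewrite last_rcons => ->; exists q.
rewrite hq rcons_path in px; case/andP: px => _ ewx.
have awx : ancestor (last r q) x.
  by rewrite /ancestor hq -rcons_cons mem_rcons in_cons mem_last orbT.
rewrite /par (negbTE xr); case: pickP => [w /andP [exw /asboolP /ancE awx'] | none] //.
by have := none (last r q); rewrite esym ewx; have /ancE/asboolP -> := awx.
Qed.

Lemma root_path_par x : x != r -> root_path x = rcons (root_path (par e r x)) x.
Proof. by case/par_spec => exr apx; exact: root_path_rcons. Qed.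

Lemma par_unique x w : e x w -> ancestor w x -> w = par e r x.
Proof.
move=> exw awx.
have xr : x != r.
  by apply: contraTneq exw => xr; move: awx; rewrite xr => /ancestor_root ->; rewrite eirr.
apply: root_path_inj; apply: (@rcons_injl _ x).
by rewrite -(root_path_rcons exw awx) -root_path_par.
Qed.

Lemma depth_par x : x != r -> depth x = (depth (par e r x)).+1.
Proof. by move=> xr; rewrite /depth {1}(root_path_par xr) size_rcons. Qed.

Lemma ancestor_par x : ancestor (par e r x) x.
Proof.
have [->|xr] := eqVneq x r; first by rewrite /par eqxx; exact: ancestor_refl.
by case: (par_spec xr).
Qed.

Lemma ancestor_iter_par m x : ancestor (iter m (par e r) x) x.
Proof.
elim: m => [|m IH]; first exact: ancestor_refl.
by rewrite iterS; apply: ancestor_trans (ancestor_par _) IH.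
Qed.

Lemma ancestor_par_of_neq w x :
  ancestor w x -> w != x -> x != r /\ ancestor w (par e r x).
Proof.
move=> awx wx.
have xr : x != r.
  by apply: contraNneq wx => xr; move: awx; rewrite xr => /ancestor_root ->.
split => //.
by move: awx; rewrite /ancestor (root_path_par xr) -rcons_cons mem_rcons in_cons (negbTE wx).
Qed.

Lemma edge_par_cases x y : e x y ->
  (y = par e r x /\ x != r) \/ (x = par e r y /\ y != r).
Proof.
move=> exy; have [ayx|nayx] := boolP (ancestor y x).
  left; split; first exact: par_unique.
  by apply: contraTneq exy => xr; move: ayx; rewrite xr => /ancestor_root ->; rewrite eirr.
right; have [px lx ux] := root_pathP x.
have hy : root_path y = rcons (root_path x) y.
  apply: root_pathE; first by rewrite rcons_path px lx.
    by rewrite last_rcons.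
  by rewrite -rcons_cons rcons_uniq nayx ux.
have yr : y != r by apply: contraNneq nayx => ->; rewrite /ancestor mem_head.
split => //; apply: root_path_inj; apply: (@rcons_injl _ y).
by rewrite -hy -root_path_par.
Qed.

Lemma walk_common_ancestor u s : path e u s -> exists2 w,
  ancestor w u /\ ancestor w (last u s) &
  depth u - depth w + (depth (last u s) - depth w) <= size s.
Proof.
elim: s u => [|x s IH] u /=; first by exists u; rewrite ?ancestor_refl ?subnn.
case/andP => eux /IH [w [awx awl] hd].
case: (edge_par_cases eux) => [[xE ur] | [uE xr]]; subst.
  exists w; first by split=> //; exact: ancestor_trans awx (ancestor_par u).
  by have := depth_par ur; have := ancestor_depth awx; lia.
have [wx|wx] := eqVneq w x; first subst w.
  exists (par e r x).
    by split; [exact: ancestor_refl | exact: ancestor_trans (ancestor_par x) awl].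
  by have := depth_par xr; have := ancestor_depth awl; lia.
have [_ awp] := ancestor_par_of_neq awx wx.
by exists w => //; have := depth_par xr; have := ancestor_depth awp; lia.
Qed.

Lemma iter_par_ancestor m w x :
  ancestor w x -> depth x - depth w <= m -> ancestor (iter m (par e r) x) w.
Proof.
elim: m x => [|m IH] x awx hd.
  have [->|wx] := eqVneq w x; first exact: ancestor_refl.
  by have := ancestor_depth_lt awx wx; lia.
have [->|wx] := eqVneq w x; first exact: ancestor_iter_par.
have [xr awp] := ancestor_par_of_neq awx wx.
by rewrite iterSr; apply: IH => //; have := depth_par xr; lia.
Qed.

(* A deepest descendant of x is a leaf, provided the tree is not a single vertex. *)
Lemma exists_leaf_descendant x y : y != r -> exists2 l, ancestor x l & is_leaf e l.
Proof.
move=> yr; have [l axl lmax] := @arg_maxnP V x (ancestor x) depth (ancestor_refl x).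
exists l => //.
have lr : l != r.
  apply: contraNneq yr => lr; move: axl lmax; rewrite lr => /ancestor_root -> lmax.
  have := lmax y; rewrite /ancestor mem_head /depth root_path_root => /(_ isT).
  rewrite /geq /= leqn0 => /eqP/size0nil hy; have [_ ly _] := root_pathP y.
  by rewrite -ly hy.
rewrite /is_leaf /deg; suff -> : [set w | e l w] = [set par e r l] by rewrite cards1.
apply/setP => w; rewrite !inE; apply/idP/eqP => [elw | ->]; last by case: (par_spec lr).
case: (edge_par_cases elw) => [[] // | [lE wr]].
have := lmax w (ancestor_trans axl _); rewrite lE ancestor_par (depth_par wr) -lE.
by move=> /(_ isT); lia.
Qed.

Lemma iter_par_common_descendant i j w a b :
  ancestor w a -> ancestor w b ->
  depth a - depth w + (depth b - depth w) <= (i + j).+1 ->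
  exists2 y, ancestor (iter i (par e r) a) y & ancestor (iter j (par e r) b) y.
Proof.
move=> awa awb hab; have [hi | hi] := leqP (depth a - depth w) i.
  exists b; last exact: ancestor_iter_par.
  exact: ancestor_trans (iter_par_ancestor awa hi) awb.
exists a; first exact: ancestor_iter_par.
by apply: ancestor_trans (iter_par_ancestor awb _) awa; lia.
Qed.

Variable ord : seq V.
Hypothesis ord_total : forall v, v \in ord.

(* The index m of a leaf below both X and Y lies in L(X) and in L(Y). *)
Lemma s_leq_t_common_descendant X Y y0 : y0 != r ->
  (exists2 y, ancestor X y & ancestor Y y) -> s_ e r ord X <= t_ e r ord Y.
Proof.
move=> y0r [y axy ayy]; have [l ayl leaf] := exists_leaf_descendant y y0r.
have lL : l \in leaves_seq e ord by rewrite mem_filter leaf ord_total.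
have inL Z : ancestor Z y -> index l (leaves_seq e ord) \in Lset e r ord Z.
  move=> azy; rewrite mem_filter mem_iota /= add0n index_mem lL andbT.
  by apply/asboolP/ancE; rewrite nth_index //; exact: ancestor_trans azy ayl.
apply: leq_trans (geq_bigmin_seq _ (inL _ axy)) _.
exact: (@leq_bigmax_seq _ _ xpredT id) (inL _ ayy) _.
Qed.

Lemma I_adj_of_power_adj k i u v :
  i <= k.-1 -> power_adj e k u v -> I_adj e r ord k i u v.
Proof.
move=> ik [uv [s [ps ls sz]]]; split => //.
have [y0 y0r] : exists y0, y0 != r.
  by have [ur|] := eqVneq u r; [exists v; rewrite -ur eq_sym | exists u].
have [w [awu awv] hd] := walk_common_ancestor ps; rewrite ls in awv hd.
set j := k.-1 - i.
have hk : k <= (i + j).+1 by rewrite /j; lia.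
have lo_hi a b : ancestor w a -> ancestor w b ->
    depth a - depth w + (depth b - depth w) <= k ->
    s_ e r ord (iter i (par e r) a) <= t_ e r ord (iter j (par e r) b).
  move=> awa awb hab; apply: (s_leq_t_common_descendant y0r).
  by apply: iter_par_common_descendant awa awb _; lia.
have lo_hi_same a : s_ e r ord (iter i (par e r) a) <= t_ e r ord (iter j (par e r) a).
  by apply: (s_leq_t_common_descendant y0r); exists a; exact: ancestor_iter_par.
rewrite /f_lo /f_hi -/j; apply: intervals_meet => //; apply: lo_hi => //; lia.
Qed.

End RootedTree.

Theorem lemma7 (V : finType) (e : rel V) (r : V) (ord : seq V) (k : nat) :
  is_tree e -> ~~ is_leaf e r -> dfs_order e r ord -> 1 <= k ->
  forall i, i <= k.-1 ->
  forall u v : V, power_adj e k u v -> I_adj e r ord k i u v.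
Proof.
move=> [[eirr esym] [econn eacy]] _ [_ ord_total _ _] _ i ik u v.
exact: I_adj_of_power_adj.
Qed.
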